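(* Let $d\ge 1$ be an integer and let $f\in C([-\tfrac12,\tfrac12]^d)$ satisfy $f(\mathbf{0})=0$, and suppose there is a constant $c>0$ such that $|f(x_1,\dots,x_d)|\ge c$ for every $\mathbf{x}=(x_1,\dots,x_d)\in[-\tfrac12,\tfrac12]^d$ having $x_j=\tfrac12$ for at least one index $1\le j\le d$. Then for any activation function $\sigma:\mathbb{R}\to\mathbb{R}$ and any fixed depth $L\ge1$, $\sigma$ networks with width less than $d$ and depth $L$ cannot approximate $f$ with arbitrary accuracy; that is, there exists $\epsilon>0$ such that no $\sigma$ network $\phi$ of depth $L$ and width $N<d$ satisfies $|f(\mathbf{x})-\phi(\mathbf{x})|<\epsilon$ for all $\mathbf{x}\in[-\tfrac12,\tfrac12]^d$.
   Context: For an activation function $\sigma:\mathbb{R}\to\mathbb{R}$, a $\sigma$ network with depth $L\in\mathbb{N}$ is a function $\phi:\mathbb{R}^d\to\mathbb{R}$ of the form $$\phi=\mathcal{L}_L\circ\sigma\circ\mathcal{L}_{L-1}\circ\sigma\circ\cdots\circ\sigma\circ\mathcal{L}_1\circ\sigma\circ\mathcal{L}_0,$$ where $\mathcal{L}_i(\mathbf{y})=\mathbf{W}_i\mathbf{y}+\mathbf{b}_i$ with $\mathbf{W}_i\in\mathbb{R}^{N_{i+1}\times N_i}$, $\mathbf{b}_i\in\mathbb{R}^{N_{i+1}}$, $N_0=d$, $N_{L+1}=1$, and $\sigma$ is applied componentwise to vectors. If $N_i=N$ for all $1\le i\le L$, the network is said to have width $N$. *)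

From HB Require Import structures.
From mathcomp Require Import all_boot all_order all_algebra.
From mathcomp Require Import all_classical all_reals all_analysis.
Unset Printing Implicit Defensive.
Import Order.TTheory GRing.Theory Num.Theory.
Import numFieldNormedType.Exports.
Local Open Scope ring_scope.
Local Open Scope classical_set_scope.

Section Nets.
Variable R : realType.

Definition cube (d : nat) : set 'cV[R]_d :=
  [set x | forall i : 'I_d, -(2^-1) <= x i 0 <= 2^-1].

Definition act (sigma : R -> R) (n : nat) (v : 'cV[R]_n) : 'cV[R]_n :=
  map_mx sigma v.

Fixpoint hidden (sigma : R -> R) (N : nat) (Ws : seq ('M[R]_N * 'cV[R]_N))
    (v : 'cV[R]_N) : 'cV[R]_N :=
  match Ws with
  | [::] => v
  | (W, b) :: t => hidden sigma N t (act sigma N (W *m v + b))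
  end.

(* phi : R^d -> R is a sigma network of depth L and width N:
   phi = L_L o sigma o L_{L-1} o ... o sigma o L_1 o sigma o L_0 *)
Definition is_sigma_network (sigma : R -> R) (d N L : nat)
    (phi : 'cV[R]_d -> R) : Prop :=
  exists (W0 : 'M[R]_(N, d)) (b0 : 'cV[R]_N)
         (Ws : seq ('M[R]_N * 'cV[R]_N)) (WL : 'M[R]_(1, N)) (bL : R),
    size Ws = L.-1 /\
    forall x : 'cV[R]_d,
      phi x = (WL *m hidden sigma N Ws (act sigma N (W0 *m x + b0))) 0 0 + bL.
End Nets.

From HB Require Import structures.
From mathcomp Require Import all_boot all_order all_algebra.
From mathcomp Require Import all_classical all_reals all_analysis.
Import Order.TTheory GRing.Theory Num.Theory.
Import numFieldNormedType.Exports.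
Local Open Scope ring_scope.
Local Open Scope classical_set_scope.

(* A network of width N < d sees its input only through the first affine layer
   R^d -> R^N, whose linear part has a nonzero kernel vector v.  Rescaling v
   so that its largest coordinate is 1/2 gives a point w on the face of the
   cube where |f| >= c, with phi w = phi 0 while f 0 = 0.  An approximation
   within c/2 at both points would force |f w| < c. *)

Lemma kermx_col_neq0 {F : fieldType} {m n : nat} (A : 'M[F]_(m, n)) :
  (m < n)%N -> exists2 v : 'cV[F]_n, A *m v = 0 & v != 0.
Proof.
move=> lt_mn; have kerA_neq0 : kermx A^T != 0.
  rewrite kermx_eq0 /row_free mxrank_tr neq_ltn.
  by rewrite (leq_ltn_trans (rank_leq_row A) lt_mn).
exists (nz_row (kermx A^T))^T; last by rewrite trmx_eq0 nz_row_eq0.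
apply: trmx_inj; rewrite trmx_mul trmxK trmx0.
exact/sub_kermxP/nz_row_sub.
Qed.

Lemma scale_onto_cube_face {R : realType} {d : nat} (v : 'cV[R]_d) :
  v != 0 -> exists a : R,
    cube R d (a *: v) /\ exists j : 'I_d, (a *: v) j 0 = 2^-1.
Proof.
move=> v_neq0; have [k vk_neq0] : exists k, v k 0 != 0.
  apply/existsP; apply: contraNT v_neq0 => /existsPn v_eq0.
  by apply/eqP/matrixP => i l; rewrite ord1 mxE; apply/eqP/negPn/v_eq0.
pose j := [arg max_(i > k) `|v i 0|]%O.
have vj_max i : `|v i 0| <= `|v j 0|.
  by rewrite /j; case: arg_maxP => //= j0 _; apply.
have vj_neq0 : v j 0 != 0.
  by rewrite -normr_gt0 (lt_le_trans _ (vj_max k)) ?normr_gt0.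
exists (2 * v j 0)^-1; split; last first.
  by exists j; rewrite mxE invfM -mulrA mulVf ?mulr1.
move=> i; rewrite mxE -ler_norml normrM normfV normrM ger0_norm //.
rewrite invfM -mulrA ler_pdivrMl // mulrC ler_pdivrMr ?normr_gt0 //.
by rewrite divff // mul1r.
Qed.

Lemma sigma_network_factors_first_layer (R : realType) (sigma : R -> R)
    (d N L : nat) (phi : 'cV[R]_d -> R) :
  is_sigma_network R sigma d N L phi ->
  exists W0 : 'M[R]_(N, d), forall x y, W0 *m x = W0 *m y -> phi x = phi y.
Proof.
move=> [W0 [b0 [Ws [WL [bL [_ phiE]]]]]].
by exists W0 => x y W0xy; rewrite !phiE W0xy.
Qed.

Theorem theorem3p2 (R : realType) (d : nat) (hd : (1 <= d)%N)
  (f : 'cV[R]_d -> R)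
  (hcont : {within cube R d, continuous f})
  (hf0 : f 0 = 0)
  (c : R) (hc : 0 < c)
  (hbd : forall x : 'cV[R]_d, cube R d x ->
         (exists j : 'I_d, x j 0 = 2^-1) -> c <= `|f x|)
  (sigma : R -> R) (L : nat) (hL : (1 <= L)%N) :
  exists eps : R, 0 < eps /\
    forall (N : nat), (N < d)%N ->
    forall phi : 'cV[R]_d -> R, is_sigma_network R sigma d N L phi ->
      ~ (forall x : 'cV[R]_d, cube R d x -> `|f x - phi x| < eps).
Proof.
exists (c / 2); split; first by rewrite divr_gt0.
move=> N lt_Nd phi /sigma_network_factors_first_layer [W0 phi_W0] approx.
have [v W0v v_neq0] := kermx_col_neq0 W0 lt_Nd.
have [a [cube_av face_av]] := scale_onto_cube_face v v_neq0.
have phi_av : phi (a *: v) = phi 0.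
  by apply: phi_W0; rewrite -scalemxAr W0v scaler0 mulmx0.
have cube0 : cube R d 0 by move=> i; rewrite mxE oppr_le0 invr_ge0 ler0n.
have := hbd _ cube_av face_av; apply/negP; rewrite -ltNge.
have -> : f (a *: v) = (f (a *: v) - phi (a *: v)) - (f 0 - phi 0).
  by rewrite hf0 phi_av sub0r opprK subrK.
rewrite [c]splitr; apply: le_lt_trans (ler_normB _ _) _.
by apply: ltrD; apply: approx.
Qed.
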